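(* Let $\lambda_{\max}=1$ and let $F:[0,1]\to\mathbb{R}_+$ be continuously differentiable with $F(0)=0$, such that $F(x)<F^\star$ for all $x\in[0,1)$ and $F'(1)>0$. Then there exists $k\in(0,F'(1)]$ such that $F(x)\le k(x-1)+F(1)$ for all $x\in[0,1]$.
   Context: $F^\star=\sup\{\mathbb{E}_\alpha[F(X)]:\alpha$ a probability measure on $[0,\lambda_{\max}]$, $X\sim\alpha$, $\mathbb{E}_\alpha[X]\le1\}$. *)

From HB Require Import structures.
From mathcomp Require Import all_boot all_order all_algebra.
From mathcomp Require Import all_classical all_reals all_analysis.
Set Implicit Arguments. Unset Strict Implicit. Unset Printing Implicit Defensive.
Import Order.TTheory GRing.Theory Num.Theory.
Import numFieldNormedType.Exports.
Local Open Scope classical_set_scope.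
Local Open Scope ring_scope.

(* A probability measure on [0,lam] is represented as a (Borel) probability
   measure on R giving full mass to [0,lam]. *)
Definition Fstar (R : realType) (lam : R) (F : R -> R) : \bar R :=
  ereal_sup [set (\int[P]_(x in [set` `[0, lam]%R]) (F x)%:E)%E
            | P in [set P : probability R R |
                     P [set` `[0, lam]] = 1%E /\
                     (\int[P]_(x in [set` `[0, lam]%R]) x%:E <= 1)%E]].

Definition C1_on01 (R : realType) (F F' : R -> R) : Prop :=
  {within `[0, 1], continuous F'} /\
  forall x : R, x \in `[0, 1] ->
    (fun y => (F y - F x) / (y - x)) @ within [set y : R | y \in `[0, 1]] (x^')
      --> F' x.

From HB Require Import structures.
From mathcomp Require Import all_boot all_order all_algebra.
From mathcomp Require Import all_classical all_reals all_analysis.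
From mathcomp Require Import lra measurable_realfun.
Import Order.TTheory GRing.Theory Num.Theory.
Import numFieldNormedType.Exports.
Local Open Scope classical_set_scope.
Local Open Scope ring_scope.

(* Integrating the bound F <= max F against any admissible measure gives
   F^* <= max F, so the hypothesis F < F^* on [0, 1) forces F x < F 1 there.
   Near 1 the difference quotient of F exceeds F'(1)/2, so the line of slope
   F'(1)/2 through (1, F 1) dominates F on some [1 - d, 1]; on [0, 1 - d/2] the
   maximum of F is strictly below F 1, and a small enough slope works there. *)

Section SupportingLine.
Context {R : realType}.
Implicit Types (A : set R) (f : R -> R) (x l : R).

(* Also at [y = x], where the quotient is [0 / 0 = 0]. *)
Lemma diffquotK f x y : f x + (f y - f x) / (y - x) * (y - x) = f y.
Proof.
have [->|yx] := eqVneq y x; first by rewrite !subrr mulr0 addr0.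
by rewrite divfK ?subr_eq0 // addrC subrK.
Qed.

Lemma diffquot_cvg_continuous [A f x l] :
  (fun y => (f y - f x) / (y - x)) @ within A x^' --> l ->
  f @ within A (nbhs x) --> f x.
Proof.
move=> dq.
have fx : f @ within A x^' --> f x.
  rewrite -[X in X @ _](funext (diffquotK f x)) -[X in _ --> X]addr0 -(mulr0 l).
  apply: cvgD; first exact: cvg_cst.
  apply: cvgM; first exact: dq.
  rewrite -(subrr x).
  apply: cvgB; last exact: cvg_cst.
  exact: cvg_trans (cvg_within _) (@nbhs_dnbhs _ x).
move=> P /= Pfx; have := fx P Pfx.
rewrite !nbhs_simpl /within /= => fxP; near=> y => Ay.
have [->|yx] := eqVneq y x; first by apply: nbhs_singleton.
move: yx Ay; near: y; exact: fxP.
Unshelve. all: by end_near. Qed.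

Lemma diffquot_gt_left [A f b l m] :
  (fun y => (f y - f b) / (y - b)) @ within A b^' --> l -> m < l ->
  exists2 d : R, 0 < d & forall y, A y -> b - d < y < b -> f y < f b + m * (y - b).
Proof.
move=> dq ml; have /(_ (within_filter _ _)) := cvgr_gt _ dq _ ml.
rewrite /within /dnbhs /within /= => /nbhs_ballP[d /= d0 near_b].
exists d => // y Ay /andP[dy yb].
have yb0 : y - b < 0 by rewrite subr_lt0.
have by_d : ball b d y by rewrite /ball /= gtr0_norm ?subr_gt0 // ltrBlDr addrC -ltrBlDr.
have := near_b y by_d; rewrite lt_eqF // => /(_ isT Ay).
by rewrite -(ltr_nM2r yb0) divfK ?ltr0_neq0 // ltrBlDl.
Qed.

Lemma supporting_line_at_right_endpoint f a b l :
  a < b -> {within `[a, b], continuous f} ->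
  (forall x, a <= x < b -> f x < f b) ->
  (fun y => (f y - f b) / (y - b)) @ within [set y | y \in `[a, b]] b^' --> l ->
  0 < l ->
  exists k, 0 < k <= l /\ forall x, x \in `[a, b] -> f x <= k * (x - b) + f b.
Proof.
move=> ab cf ltf dq l0.
have half_l : l / 2 < l by lra.
have [d d0 below_chord] := diffquot_gt_left dq half_l.
set c := Num.max a (b - d / 2).
have ac : a <= c by rewrite le_max lexx.
have cb : c < b by rewrite gt_max ab /= ltrBlDr ltrDl divr_gt0.
have acb : `[a, c] `<=` `[a, b].
  by move=> t; rewrite /= !in_itv /= => /andP[-> tc]; exact: le_trans tc (ltW cb).
have [x0 x0_in fx0_max] := EVT_max ac (continuous_subspaceW acb cf).
have gap : f x0 < f b.
  by apply: ltf; move: x0_in; rewrite in_itv /= => /andP[-> x0c]; exact: le_lt_trans x0c cb.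
set k := Num.min (l / 2) ((f b - f x0) / (b - a)).
have k0 : 0 < k by rewrite lt_min !divr_gt0 ?subr_gt0.
have kl2 : k <= l / 2 by rewrite ge_min lexx.
have k_gap : k * (b - a) <= f b - f x0 by rewrite -ler_pdivlMr ?subr_gt0 // ge_min lexx orbT.
exists k; split; first by rewrite k0 /=; lra.
move=> x x_in; move: (x_in); rewrite in_itv /= => /andP[ax xb].
have [xc|cx] := leP x c.
  have : f x <= f x0 by apply: fx0_max; rewrite in_itv /= ax xc.
  nra.
have [->|xnb] := eqVneq x b; first by rewrite subrr mulr0 add0r.
have x_lt_b : x < b by rewrite lt_neqAle xnb xb.
have dx : b - d < x by move: cx; rewrite gt_max => /andP[_]; lra.
have := below_chord x x_in; rewrite dx x_lt_b => /(_ isT).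
nra.
Qed.

Lemma Fstar_le (lam M : R) (F : R -> R) :
  measurable_fun `[0, lam] F ->
  (forall x, x \in `[0, lam] -> 0 <= F x <= M) -> (Fstar lam F <= M%:E)%E.
Proof.
move=> mF FM; apply: ge_ereal_sup => _ [P [P1 _] <-].
rewrite -[M%:E]mule1 -P1 -integral_cst //.
apply: ge0_le_integral => //.
- by move=> x /FM/andP[F0 _]; rewrite lee_fin.
- exact/measurable_EFinP.
- by move=> x /FM/andP[_ FxM]; rewrite lee_fin.
Qed.

Lemma lt_right_endpoint_of_lt_Fstar [lam : R] [F : R -> R] :
  0 <= lam -> {within `[0, lam], continuous F} ->
  (forall x, x \in `[0, lam] -> 0 <= F x) ->
  (forall x, 0 <= x < lam -> ((F x)%:E < Fstar lam F)%E) ->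
  forall x, 0 <= x < lam -> F x < F lam.
Proof.
move=> lam0 cF F0 ltF.
have [c c_in Fc_max] := EVT_max lam0 cF.
have Fstar_le_Fc : (Fstar lam F <= (F c)%:E)%E.
  apply: Fstar_le; first exact: subspace_continuous_measurable_fun.
  by move=> x x_in; rewrite F0 // Fc_max.
have c_lam : c = lam.
  move: c_in; rewrite in_itv /= => /andP[c0 clam].
  apply/eqP; rewrite eq_le clam leNgt; apply/negP => c_lt.
  have c_ok : 0 <= c < lam by rewrite c0.
  by have := lt_le_trans (ltF c c_ok) Fstar_le_Fc; rewrite ltxx.
by move=> x x_ok; rewrite -lte_fin -c_lam; exact: lt_le_trans (ltF x x_ok) Fstar_le_Fc.
Qed.
End SupportingLine.

Theorem lemmaA1 (R : realType) (F F' : R -> R) :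
  (forall x : R, x \in `[0, 1] -> 0 <= F x) ->
  C1_on01 F F' ->
  F 0 = 0 ->
  (forall x : R, 0 <= x < 1 -> ((F x)%:E < Fstar 1 F)%E) ->
  0 < F' 1 ->
  exists k : R, 0 < k <= F' 1 /\
    (forall x : R, x \in `[0, 1] -> F x <= k * (x - 1) + F 1).
Proof.
move=> F0 [_ dF] _ ltF dF1_gt0.
have cF : ({within `[0, 1], continuous F}).
  apply/subspace_continuousP => x x_in.
  by apply: diffquot_cvg_continuous (dF x _); rewrite inE.
have ltF1 := lt_right_endpoint_of_lt_Fstar ler01 cF F0 ltF.
apply: supporting_line_at_right_endpoint ltr01 cF ltF1 (dF 1 _) dF1_gt0.
by rewrite in_itv /= lexx ler01.
Qed.
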